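(* For every instance of 2NC-TAP, every extreme point $x$ of the feasible region of the partition LP $(P)$ satisfies $0\le x_\ell\le 1$ for every link $\ell\in L(G)$; that is, all extreme points of $(P)$ lie in $[0,1]^{L(G)}$.
   Context: An instance of 2NC-TAP consists of a simple undirected graph $G=(V,E)$ with $|V|\ge 3$, a spanning tree $T\subseteq E$ of $G$ (whose edges have cost $0$), and nonnegative costs $\mathrm{cost}(\ell)$ on the links, i.e. the edges of $L(G):=E\setminus T$. Let $N(T)$ denote the set of non-leaf nodes of $T$. For $u\in N(T)$, let $\pi_u$ be the partition of $V\setminus\{u\}$ into the vertex sets of the connected components of $T-u$, and let $\Pi_u$ be the set of all partitions $\mathcal P$ of $V\setminus\{u\}$ such that every set of $\pi_u$ is contained in some set of $\mathcal P$. A link $\ell$ crosses $\mathcal P\in\Pi_u$ if neither end node of $\ell$ is $u$ and the two end nodes of $\ell$ lie in different sets of $\mathcal P$. The partition LP $(P)$ has a variable $x_\ell$ for each link and reads: minimize $\sum_{\ell\in L(G)}\mathrm{cost}(\ell)x_\ell$ subject to $\sum_{\ell \text{ crosses } \mathcal P} x_\ell\ge |\mathcal P|-1$ for all $u\in N(T)$ and all $\mathcal P\in\Pi_u$, and $x_\ell\ge 0$ for all $\ell\in L(G)$. *)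

From mathcomp Require Import all_boot all_order all_algebra.
Set Implicit Arguments. Unset Strict Implicit. Unset Printing Implicit Defensive.
Import Order.TTheory GRing.Theory Num.Theory.
Local Open Scope ring_scope.

Section TwoNCTAP.
Variable V : finType.

Definition simple_graph (E : {set {set V}}) : bool :=
  [forall e in E, #|e| == 2]%N.

Definition adj (F : {set {set V}}) : rel V := fun a b => [set a; b] \in F.

Definition spanning_tree (T : {set {set V}}) : Prop :=
  [/\ forall e, e \in T -> #|e| = 2%N,
      forall a b : V, connect (adj T) a b
    & #|T| = #|V|.-1 ].

Definition links (E T : {set {set V}}) : {set {set V}} := E :\: T.

Definition nonleaf (T : {set {set V}}) (u : V) : bool :=
  (2 <= #|[set e in T | u \in e]|)%N.

Definition adj_minus (T : {set {set V}}) (u : V) : rel V :=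
  fun a b => [&& a != u, b != u & [set a; b] \in T].

Definition in_Pi (T : {set {set V}}) (u : V) (P : {set {set V}}) : Prop :=
  partition P [set~ u] /\
  forall a b : V, a != u -> b != u -> connect (adj_minus T u) a b ->
    pblock P a = pblock P b.

Definition crosses (u : V) (P : {set {set V}}) (l : {set V}) : bool :=
  [&& u \notin l &
      [exists a, exists b, [&& l == [set a; b], a != b & pblock P a != pblock P b]]].

Definition link_t (L : {set {set V}}) := {l : {set V} | l \in L}.

Variable R : realFieldType.

Definition feasibleP (E T : {set {set V}}) (x : link_t (links E T) -> R) : Prop :=
  (forall l, 0 <= x l) /\
  forall u : V, nonleaf T u -> forall P : {set {set V}}, in_Pi T u P ->
    \sum_(l : link_t (links E T) | crosses u P (val l)) x l >= (#|P|%:R - 1).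

Definition extreme_pointP (E T : {set {set V}}) (x : link_t (links E T) -> R) : Prop :=
  feasibleP x /\
  forall (y z : link_t (links E T) -> R) (lam : R),
    feasibleP y -> feasibleP z -> 0 < lam < 1 ->
    (forall l, x l = lam * y l + (1 - lam) * z l) ->
    forall l, y l = z l.

End TwoNCTAP.

From mathcomp Require Import all_boot all_order all_algebra.
From mathcomp Require Import ring lra.
Import Order.TTheory GRing.Theory Num.Theory.
Set Implicit Arguments. Unset Strict Implicit. Unset Printing Implicit Defensive.

(* If x_l > 1 at a feasible point x, then x is the midpoint of the points
   obtained by setting x_l to 2 x_l - 1 and to 1. The first is feasible since
   the constraints are monotone in x. For the second, take a constraint for
   (u, P) crossed by l: merging the two blocks of P met by l gives a partition
   P' in Pi_u with one block fewer, each link crossing P' crosses P and differs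
   from l, so the links other than l already carry |P| - 2 and x_l = 1 supplies
   the rest. Hence x is not an extreme point. *)

Section MergeBlocks.
Variables (V : finType) (P : {set {set V}}) (D : {set V}) (a b : V).
Hypotheses (partP : partition P D) (aD : a \in D) (bD : b \in D).
Hypothesis neq_ab : pblock P a != pblock P b.

Let A := pblock P a.
Let B := pblock P b.

Definition merge_blocks : {set {set V}} := (A :|: B) |: (P :\ A :\ B).

Definition merged_block (X : {set V}) : {set V} :=
  if X \in [set A; B] then A :|: B else X.

Let coverP x : x \in D -> x \in cover P.
Proof. by case/and3P: partP => /eqP->. Qed.

Let trivP : trivIset P. Proof. by case/and3P: partP. Qed.
Let AP : A \in P. Proof. exact/pblock_mem/coverP. Qed.
Let BP : B \in P. Proof. exact/pblock_mem/coverP. Qed.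
Let aA : a \in A. Proof. by rewrite mem_pblock coverP. Qed.
Let bB : b \in B. Proof. by rewrite mem_pblock coverP. Qed.

Let in_merge X :
  (X \in merge_blocks) = (X == A :|: B) || [&& X != B, X != A & X \in P].
Proof. by rewrite !inE. Qed.

Let AB_notin_P : A :|: B \notin P.
Proof.
apply/negP=> ABP; case/negP: neq_ab.
by rewrite /A !(def_pblock trivP ABP) // inE ?aA ?bB ?orbT.
Qed.

Let merge_blocks_trivIset : trivIset merge_blocks.
Proof.
have disjP X Y : X \in P -> Y \in P -> X != Y -> [disjoint X & Y].
  by move/trivIsetP: trivP; apply.
have disjAB X : [&& X != B, X != A & X \in P] -> [disjoint A :|: B & X].
  case/and3P=> XB XA XP; rewrite disjoints_subset subUset -!disjoints_subset.
  by rewrite !disjP // eq_sym.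
apply/trivIsetP => X Y; rewrite !in_merge.
case/orP=> [/eqP-> | HX]; case/orP=> [/eqP-> | HY] //.
- by rewrite eqxx.
- by move=> _; apply: disjAB.
- by move=> _; rewrite disjoint_sym; apply: disjAB.
- by case/and3P: HX => _ _ XP; case/and3P: HY => _ _ YP; apply: disjP.
Qed.

Lemma pblock_merge_blocks x :
  x \in D -> pblock merge_blocks x = merged_block (pblock P x).
Proof.
move=> xD; have xX : x \in pblock P x by rewrite mem_pblock coverP.
rewrite /merged_block; case: ifP => [| /negbT]; rewrite !inE.
- move=> eX; apply: def_pblock; rewrite // ?in_merge ?eqxx //.
  by case/orP: eX => /eqP<-; rewrite inE xX ?orbT.
- case/norP=> nA nB; apply: def_pblock => //.
  by rewrite in_merge nA nB pblock_mem ?coverP ?orbT.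
Qed.

Lemma merge_blocks_partition : partition merge_blocks D.
Proof.
case/and3P: partP => /eqP covP _ n0P.
rewrite /partition merge_blocks_trivIset in_merge negb_or !negb_and n0P !orbT andbT.
apply/andP; split; last by apply/eqP=> /setP/(_ a); rewrite !inE aA.
apply/eqP/setP => x; rewrite -covP; apply/bigcupP/bigcupP.
- case=> X; rewrite in_merge => /orP[/eqP-> | /and3P[_ _ XP] xX].
    by rewrite inE => /orP[xA|xB]; [exists A | exists B].
  by exists X.
- case=> X XP xX; have [eA|nA] := eqVneq X A.
    by exists (A :|: B); rewrite ?in_merge ?eqxx // inE -eA xX.
  have [eB|nB] := eqVneq X B.
    by exists (A :|: B); rewrite ?in_merge ?eqxx // inE -eB xX orbT.
  by exists X; rewrite // in_merge nA nB XP orbT.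
Qed.

Lemma card_merge_blocks : #|merge_blocks|.+1 = #|P|.
Proof.
rewrite /merge_blocks cardsU1 !inE (negbTE AB_notin_P) !andbF /=.
by rewrite (cardsD1 A P) AP (cardsD1 B (P :\ A)) !inE BP eq_sym neq_ab.
Qed.

End MergeBlocks.

Section Crossing.
Variables (V : finType) (T : {set {set V}}) (u : V).

Lemma crossesP (P : {set {set V}}) (l : {set V}) :
  crosses u P l -> exists c d,
    [/\ l = [set c; d], c \in [set~ u], d \in [set~ u]
      & pblock P c != pblock P d].
Proof.
case/andP=> ul /existsP[c /existsP[d /and3P[/eqP el _ ncd]]].
exists c, d; split; rewrite // !inE; apply: contraNneq ul => <-.
- by rewrite el !inE eqxx.
- by rewrite el !inE eqxx orbT.
Qed.

Lemma crosses_merge (P : {set {set V}}) (l0 : {set V}) :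
  in_Pi T u P -> crosses u P l0 ->
  exists2 P', in_Pi T u P' &
    (#|P'|.+1 = #|P|)%N /\ forall l, crosses u P' l -> crosses u P l && (l != l0).
Proof.
move=> [partP connP] /crossesP[c [d [-> cu du ncd]]].
have pbM := pblock_merge_blocks partP cu du.
exists (merge_blocks P c d).
  split=> [|a b au bu ab]; first exact: merge_blocks_partition.
  by rewrite !pbM ?in_setC1 // (connP a b au bu ab).
split; first exact: card_merge_blocks partP cu du ncd.
move=> l crl; have [c' [d' [el c'u d'u]]] := crossesP crl.
rewrite !pbM // => ncd'; apply/andP; split.
  case/andP: crl => ul _; rewrite /crosses ul; apply/existsP; exists c'.
  apply/existsP; exists d'; rewrite el eqxx /=.
  have npb : pblock P c' != pblock P d' by apply: contraNneq ncd' => ->.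
  by rewrite npb andbT; apply: contraNneq npb => ->.
rewrite el; apply: contraNneq ncd' => e.
have : c' \in [set c; d] /\ d' \in [set c; d] by rewrite -e !inE !eqxx orbT.
rewrite /merged_block !inE => -[] /orP[]/eqP-> /orP[]/eqP->;
  by rewrite !eqxx ?orbT.
Qed.
End Crossing.

Local Open Scope ring_scope.

Lemma ler_sum_subpred (R : numDomainType) (I : finType) (P Q : pred I)
    (F : I -> R) :
  (forall i, 0 <= F i) -> (forall i, P i -> Q i) ->
  \sum_(i | P i) F i <= \sum_(i | Q i) F i.
Proof.
move=> F_ge0 PQ; rewrite [leLHS]big_mkcond [leRHS]big_mkcond /=.
by apply: ler_sum => i _; case: ifP => [/PQ-> // | _]; case: ifP.
Qed.

Section PartitionLP.
Variables (R : realFieldType) (V : finType) (E T : {set {set V}}).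
Local Notation link := (link_t (links E T)).

Lemma feasibleP_ge (x y : link -> R) :
  feasibleP x -> (forall l, x l <= y l) -> feasibleP y.
Proof.
move=> [x_ge0 x_cut] xy; split=> [l | u uT P PPi].
  exact: le_trans (x_ge0 l) (xy l).
by apply: le_trans (x_cut u uT P PPi) _; apply: ler_sum.
Qed.

Lemma feasibleP_crossing_others (x : link -> R) u P l0 :
  feasibleP x -> nonleaf T u -> in_Pi T u P -> crosses u P (val l0) ->
  #|P|%:R - 2 <= \sum_(l | crosses u P (val l) && (l != l0)) x l.
Proof.
move=> [x_ge0 x_cut] uT PPi /(crosses_merge PPi)[P' P'Pi [cardP' crossP']].
have sub_cross : \sum_(l | crosses u P' (val l)) x l <=
                 \sum_(l | crosses u P (val l) && (l != l0)) x l.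
  apply: ler_sum_subpred => // l /crossP' /andP[-> /=].
  by apply: contra => /eqP->.
have := x_cut u uT P' P'Pi; rewrite -cardP' -addn1 natrD; lra.
Qed.

Lemma feasibleP_cap1 (x : link -> R) l0 :
  feasibleP x -> 1 <= x l0 -> feasibleP [eta x with l0 |-> 1].
Proof.
move=> fx x1; have [x_ge0 x_cut] := fx.
split=> [l | u uT P PPi] /=; first by case: eqP => // _; exact: ler01.
have [crl0 | ncrl0] := boolP (crosses u P (val l0)); last first.
  rewrite (eq_bigr x) ?x_cut // => l crl; case: eqP => // el.
  by move: crl; rewrite el (negbTE ncrl0).
rewrite (bigD1 l0) //= eqxx (eq_bigr x) => [|l /andP[_ /negbTE->] //].
have := feasibleP_crossing_others fx uT PPi crl0; lra.
Qed.

End PartitionLP.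

Theorem mainTheorem1 (R : realFieldType) (V : finType)
  (E T : {set {set V}}) (cost : link_t (links E T) -> R)
  (hV : (3 <= #|V|)%N) (hE : simple_graph E) (hTE : T \subset E)
  (hT : spanning_tree T) (hcost : forall l, 0 <= cost l)
  (x : link_t (links E T) -> R) :
  extreme_pointP x -> forall l, 0 <= x l <= 1.
Proof.
move=> [fx x_extreme] l0; rewrite fx.1 /= leNgt; apply/negP => x_gt1.
pose y := [eta x with l0 |-> 2 * x l0 - 1].
pose z := [eta x with l0 |-> 1].
have fy : feasibleP y by apply: feasibleP_ge fx _ => l /=; case: eqP => [->|]; lra.
have fz : feasibleP z by apply: feasibleP_cap1; rewrite ?ltW.
have half_01 : 0 < (2^-1 : R) < 1 by rewrite invr_gt0 ltr0n invf_lt1 ?ltr0n ?ltr1n.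
have x_mid l : x l = 2^-1 * y l + (1 - 2^-1) * z l.
  by rewrite /y /z /=; case: eqP => [->|_]; field.
have := x_extreme y z 2^-1 fy fz half_01 x_mid l0.
rewrite /y /z /= eqxx; lra.
Qed.
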